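(* For any $1\le d\le n$ and $\mathcal{F}$ being any one of the four classes (1) all, (2) homogeneous, (3) $d$-homogeneous, (4) degree at most $d$, we have \[ \mathrm{qBr}_n(\mathcal{F}^q_n)\le \mathrm{Br}_n(\mathcal{F}_n)\qquad\text{and}\qquad \mathrm{Br}_{3n}(\mathcal{F}_{3n})\le 3\,\mathrm{qBr}_n(\mathcal{F}^q_n). \]
   Context: Every $f:\{-1,1\}^m\to\mathbb{C}$ expands as $f=\sum_{S\subset[m]}\widehat f(S)\chi_S$ with $\chi_S(x)=\prod_{j\in S}x_j$. $f$ is of degree $d$ if $\widehat f(S)=0$ for $|S|>d$, $d$-homogeneous if $\widehat f(S)=0$ for $|S|\ne d$, and homogeneous if it is $d$-homogeneous for some $d$. The Boolean radius $\mathrm{Br}_m(f)$ is the positive real number $r$ with $\sum_{S\subset[m]}|\widehat f(S)|r^{|S|}=\|f\|_\infty$, and for a class $\mathcal{F}$ of functions $\mathrm{Br}_m(\mathcal{F})=\inf\{\mathrm{Br}_m(f):f\in\mathcal{F}\}$. The classes of functions on $\{-1,1\}^m$: $\mathcal{F}_m(\mathrm{all})$ all functions, $\mathcal{F}_m(\mathrm{hom})$ all homogeneous functions, $\mathcal{F}_m(=d)$ all $d$-homogeneous functions, $\mathcal{F}_m(\le d)$ all functions of degree at most $d$. Quantum setting: with Pauli matrices $\sigma_0=I_2$, $\sigma_1=\begin{pmatrix}0&1\\1&0\end{pmatrix}$, $\sigma_2=\begin{pmatrix}0&-i\\ i&0\end{pmatrix}$, $\sigma_3=\begin{pmatrix}1&0\\0&-1\end{pmatrix}$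 and $\sigma_{\mathbf{s}}=\sigma_{s_1}\otimes\cdots\otimes\sigma_{s_n}$ for $\mathbf{s}\in\{0,1,2,3\}^n$, every $A\in M_2(\mathbb{C})^{\otimes n}$ expands uniquely as $A=\sum_{\mathbf{s}}\widehat A_{\mathbf{s}}\sigma_{\mathbf{s}}$; $|\mathbf{s}|$ is the number of nonzero entries. Degree $d$, $d$-homogeneous and homogeneous are defined analogously using $|\mathbf{s}|$. The quantum Boolean radius $\mathrm{qBr}_n(A)$ is the positive real $r$ with $\sum_{\mathbf{s}}|\widehat A_{\mathbf{s}}|r^{|\mathbf{s}|}=\|A\|$ (operator norm), and $\mathrm{qBr}_n(\mathcal{F}')=\inf\{\mathrm{qBr}_n(A):A\in\mathcal{F}'\}$. For each class $\mathcal{F}_n$ above, $\mathcal{F}^q_n$ denotes the corresponding class of matrices in $M_2(\mathbb{C})^{\otimes n}$ (all, homogeneous, $d$-homogeneous, degree at most $d$). *)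

From HB Require Import structures.
From mathcomp Require Import all_boot all_order all_algebra.
From mathcomp Require Import complex.
From mathcomp Require Import boolp classical_sets reals constructive_ereal ereal.
Set Implicit Arguments. Unset Strict Implicit. Unset Printing Implicit Defensive.
Import Order.TTheory GRing.Theory Num.Theory.
Local Open Scope ring_scope.
Local Open Scope classical_set_scope.

Section Defs.
Variable R : realType.
Local Notation C := R[i].
Local Notation normc := (@ComplexField.Normc.normc R).

(* The Boolean cube {-1,1}^m, encoded as bool vectors: x j = true means x_j = -1;
   the same type encodes the computational basis {0,1}^n of (C^2)^{⊗n}. *)
Definition cube (m : nat) := {ffun 'I_m -> bool}.

Definition sgnb (b : bool) : C := if b then -1 else 1.

Definition chi (m : nat) (S : {set 'I_m}) (x : cube m) : C :=
  \prod_(j in S) sgnb (x j).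

Definition fourier (m : nat) (f : cube m -> C) (S : {set 'I_m}) : C :=
  (2 ^+ m)^-1 * \sum_(x : cube m) f x * chi S x.

Definition supnorm (m : nat) (f : cube m -> C) : R :=
  \big[Num.max/0]_(x : cube m) normc (f x).

(* Boolean radius: the positive r with sum_S |fhat S| r^|S| = ||f||_oo
   (taken as a sup in \bar R; it is +oo exactly when f is constant). *)
Definition Br (m : nat) (f : cube m -> C) : \bar R :=
  ereal_sup [set r%:E | r in [set r : R | 0 < r /\
     \sum_(S : {set 'I_m}) normc (fourier f S) * r ^+ #|S| = supnorm f]].

Inductive fclass := Fall | Fhom | Feq | Fle.

Definition in_class (c : fclass) (d : nat) (I : finType) (wt : I -> nat)
    (coef : I -> C) : Prop :=
  match c with
  | Fall => True
  | Fhom => exists e : nat, forall i, coef i != 0 -> wt i = e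
  | Feq => forall i, coef i != 0 -> wt i = d
  | Fle => forall i, coef i != 0 -> (wt i <= d)%N
  end.

Definition Br_class (c : fclass) (d m : nat) : \bar R :=
  ereal_inf [set Br f | f in [set f : cube m -> C |
     in_class c d (fun S : {set 'I_m} => #|S|) (fourier f)]].

(* Pauli matrices sigma_0..sigma_3, entries indexed by bool (false = 0, true = 1) *)
Definition pauli (a : 'I_4) (x y : bool) : C :=
  match nat_of_ord a with
  | 0 => if x == y then 1 else 0
  | 1 => if x != y then 1 else 0
  | 2 => if x == y then 0 else (if x then 'i else - 'i)
  | _ => if x == y then (if x then -1 else 1) else 0
  end.

(* An element of M_2(C)^{⊗n}, as a matrix indexed by the basis {0,1}^n:
   A x y is the (x,y) entry (Kronecker-product convention). *)
Definition qop (n : nat) := cube n -> cube n -> C.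

Definition pidx (n : nat) := {ffun 'I_n -> 'I_4}.

Definition pauli_string (n : nat) (s : pidx n) : qop n :=
  fun x y => \prod_(k < n) pauli (s k) (x k) (y k).

Definition pweight (n : nat) (s : pidx n) : nat := #|[set k | s k != ord0]|.

Definition pcoef (n : nat) (A : qop n) (s : pidx n) : C :=
  (2 ^+ n)^-1 * \sum_(x : cube n) \sum_(y : cube n) pauli_string s x y * A y x.

Definition vnorm (n : nat) (v : cube n -> C) : R :=
  Num.sqrt (\sum_(x : cube n) normc (v x) ^+ 2).

Definition apply (n : nat) (A : qop n) (v : cube n -> C) : cube n -> C :=
  fun x => \sum_(y : cube n) A x y * v y.

Definition opnorm (n : nat) (A : qop n) : R :=
  sup [set vnorm (apply A v) | v in [set v : cube n -> C | vnorm v = 1]].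

Definition qBr (n : nat) (A : qop n) : \bar R :=
  ereal_sup [set r%:E | r in [set r : R | 0 < r /\
     \sum_(s : pidx n) normc (pcoef A s) * r ^+ pweight s = opnorm A]].

Definition qBr_class (c : fclass) (d n : nat) : \bar R :=
  ereal_inf [set qBr A | A in [set A : qop n |
     in_class c d (@pweight n) (pcoef A)]].

End Defs.

(* A function f on {-1,1}^n and the diagonal operator diag f have the same
   radius: the Pauli coefficients of diag f are the Fourier coefficients of f,
   carried by the strings made of I and Z, and ||diag f|| = ||f||_oo.  This
   gives the first inequality.
   For the second, send A to the function g on {-1,1}^(3n) whose Fourier
   coefficient at the code of s (the bit (k, j) for every qubit k with
   s_k = j + 1) is 3^-|s| A_s, so that sum_S |g_S| r^|S| = sum_s |A_s| (r/3)^|s|.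
   As (sigma_0 + e sigma_(j+1)) / 2 projects onto the e-eigenvector of
   sigma_(j+1), g(x) is the average of <psi, A psi> over 3^n product unit
   vectors psi, whence ||g||_oo <= ||A||.  So a radius r of g has
   sum_s |A_s| (r/3)^|s| <= ||A||, and the intermediate value theorem gives a
   radius q >= r/3 of A. *)

From Pilot Require Import Defs.
From HB Require Import structures.
From mathcomp Require Import all_boot all_order all_algebra.
From mathcomp Require Import complex.
From mathcomp Require Import boolp classical_sets reals constructive_ereal ereal.
From mathcomp Require Import topology normedtype derive.
From mathcomp Require Import ring lra.
Set Implicit Arguments. Unset Strict Implicit. Unset Printing Implicit Defensive.
Import Order.TTheory GRing.Theory Num.Theory.
Import numFieldNormedType.Exports ComplexField.Normc.
Local Open Scope ring_scope.

Section ComplexModulus.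
Variable R : realType.
Local Notation C := R[i].

Lemma normc_ge0 (z : C) : 0 <= normc z.
Proof. exact: (@normr_ge0 _ (Rcomplex R)). Qed.

Lemma normc_sum (I : Type) (r : seq I) (P : pred I) (F : I -> C) :
  normc (\sum_(i <- r | P i) F i) <= \sum_(i <- r | P i) normc (F i).
Proof. exact: (@ler_norm_sum _ (Rcomplex R)). Qed.

Lemma normc_prod (I : finType) (F : I -> C) :
  normc (\prod_i F i) = \prod_i normc (F i).
Proof.
exact: (big_morph _ (@normcM R) (@normc1 R)).
Qed.

Lemma normcX (z : C) m : normc (z ^+ m) = normc z ^+ m.
Proof.
elim: m => [|m IH]; first by rewrite !expr0 normc1.
by rewrite !exprS normcM IH.
Qed.

Lemma normc_nat m : normc (m%:R : C) = m%:R.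
Proof. by rewrite (normcMn (1 : Rcomplex R)) normc1. Qed.

Lemma normc_real (x : R) : normc x%:C%C = `|x|.
Proof. by rewrite /= expr0n /= addr0 sqrtr_sqr. Qed.

Lemma normc_conj (z : C) : normc z^* = normc z.
Proof. by case: z => a b /=; rewrite sqrrN. Qed.

Lemma normc_sgnb b : normc (sgnb R b) = 1.
Proof.
by case: b; rewrite /sgnb ?(normcN (1 : Rcomplex R)) normc1.
Qed.

End ComplexModulus.

Lemma sumr_sqr_ge0 (R : realDomainType) (I : Type) (r : seq I) (P : pred I) (F : I -> R) :
  0 <= \sum_(i <- r | P i) F i ^+ 2.
Proof. by apply: sumr_ge0 => i _; exact: sqr_ge0. Qed.

Lemma CauchySchwarz_real (R : realType) (I : finType) (a b : I -> R) :
  \sum_i a i * b i <= Num.sqrt (\sum_i a i ^+ 2) * Num.sqrt (\sum_i b i ^+ 2).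
Proof.
rewrite -sqrtrM ?sumr_sqr_ge0 //; apply: le_trans (ler_norm _) _.
rewrite -sqrtr_sqr ler_sqrt ?mulr_ge0 ?sumr_sqr_ge0 //.
have double_sum (F : I -> R) (G : I -> R) :
    \sum_i \sum_j F i * G j = (\sum_i F i) * (\sum_i G i).
  by rewrite mulr_suml; apply: eq_bigr => i _; rewrite mulr_sumr.
have lagrange : \sum_i \sum_j (a i * b j - a j * b i) ^+ 2 =
    (\sum_i a i ^+ 2) * (\sum_i b i ^+ 2) + (\sum_i a i ^+ 2) * (\sum_i b i ^+ 2)
    - 2%:R * (\sum_i a i * b i) ^+ 2.
  transitivity (\sum_i \sum_j a i ^+ 2 * b j ^+ 2 + \sum_i \sum_j a j ^+ 2 * b i ^+ 2
      - 2%:R * \sum_i \sum_j (a i * b i) * (a j * b j)).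
    rewrite mulr_sumr -!big_split -sumrB; apply: eq_bigr => i _.
    rewrite mulr_sumr -!big_split -sumrB; apply: eq_bigr => j _ /=; ring.
  by rewrite [X in _ + X - _]exchange_big /= !double_sum -expr2.
have : 0 <= \sum_i \sum_j (a i * b j - a j * b i) ^+ 2.
  by apply: sumr_ge0 => i _; apply: sumr_ge0 => j _; exact: sqr_ge0.
rewrite lagrange; lra.
Qed.

Section OperatorNorm.
Variable R : realType.
Local Notation C := R[i].

Lemma vnorm_ge0 n (v : cube n -> C) : 0 <= vnorm v.
Proof. exact: sqrtr_ge0. Qed.

Lemma vnorm_le n (v : cube n -> C) (M : cube n -> R) :
  (forall x, normc (v x) <= M x) -> vnorm v <= Num.sqrt (\sum_x M x ^+ 2).
Proof.
move=> vM; rewrite ler_sqrt ?sumr_sqr_ge0 //.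
by apply: ler_sum => x _; rewrite ler_sqr ?nnegrE ?normc_ge0 ?(le_trans (normc_ge0 _) (vM x)).
Qed.

Lemma normc_le_vnorm n (v : cube n -> C) x : normc (v x) <= vnorm v.
Proof.
rewrite -[leLHS]ger0_norm ?normc_ge0 // -sqrtr_sqr ler_sqrt ?sumr_sqr_ge0 //.
by rewrite (bigD1 x) //= lerDl sumr_sqr_ge0.
Qed.

Lemma normc_dot_le n (v w : cube n -> C) :
  normc (\sum_x (v x)^* * w x) <= vnorm v * vnorm w.
Proof.
apply: le_trans (normc_sum _ _ _) _.
under eq_bigr => x _ do rewrite normcM normc_conj.
exact: CauchySchwarz_real.
Qed.

Lemma vnorm_mul_le n (a v : cube n -> C) M :
  (forall x, normc (a x) <= M) -> vnorm (fun x => a x * v x) <= M * vnorm v.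
Proof.
move=> aM; have M_ge0 : 0 <= M := le_trans (normc_ge0 _) (aM [ffun=> false]).
rewrite -[M]ger0_norm // -sqrtr_sqr -sqrtrM ?sqr_ge0 //.
rewrite ler_sqrt ?mulr_ge0 ?sqr_ge0 ?sumr_sqr_ge0 //.
rewrite mulr_sumr; apply: ler_sum => x _; rewrite normcM exprMn ler_wpM2r ?sqr_ge0 //.
by rewrite ler_sqr ?nnegrE ?normc_ge0 ?aM.
Qed.

Definition point_vec n (x0 : cube n) (c : C) : cube n -> C :=
  fun x => if x == x0 then c else 0.

Lemma vnorm_point_vec n (x0 : cube n) c : vnorm (point_vec x0 c) = normc c.
Proof.
rewrite /vnorm (bigD1 x0) //= big1 => [|x /negbTE x_x0].
  by rewrite /point_vec eqxx addr0 sqrtr_sqr ger0_norm ?normc_ge0.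
by rewrite /point_vec x_x0 normc0 expr0n.
Qed.

Lemma vnorm_basis n (x0 : cube n) : vnorm (point_vec x0 1) = 1.
Proof. by rewrite vnorm_point_vec normc1. Qed.

Lemma has_sup_opnorm n (A : qop R n) :
  has_sup [set vnorm (apply A v) | v in [set v | vnorm v = 1]].
Proof.
pose e : cube n -> C := point_vec [ffun=> false] 1.
split; first by exists (vnorm (apply A e)), e; first exact: vnorm_basis.
exists (Num.sqrt (\sum_x (\sum_y normc (A x y)) ^+ 2)) => _ [v v1 <-].
apply: vnorm_le => x; apply: le_trans (normc_sum _ _ _) _; apply: ler_sum => y _.
rewrite normcM ler_piMr ?normc_ge0 //.
by rewrite -v1 normc_le_vnorm.
Qed.

Lemma vnorm_apply_le_opnorm n (A : qop R n) v :
  vnorm v = 1 -> vnorm (apply A v) <= opnorm A.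
Proof. by move=> v1; apply: sup_upper_bound (has_sup_opnorm A) _ _; exists v. Qed.

Lemma opnorm_le n (A : qop R n) M :
  (forall v, vnorm v = 1 -> vnorm (apply A v) <= M) -> opnorm A <= M.
Proof.
by move=> AM; apply: ge_sup (has_sup_opnorm A).1 _ => _ [v v1 <-]; exact: AM.
Qed.

Lemma opnorm_ge0 n (A : qop R n) : 0 <= opnorm A.
Proof. exact: le_trans (vnorm_ge0 _) (vnorm_apply_le_opnorm A (vnorm_basis [ffun=> false])). Qed.

End OperatorNorm.

Lemma in_class_transfer (R : realType) c d (I J : finType)
    (wtI : I -> nat) (coefI : I -> R[i]) (wtJ : J -> nat) (coefJ : J -> R[i]) :
  (forall j, coefJ j != 0 -> exists2 i, coefI i != 0 & wtJ j = wtI i) ->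
  in_class c d wtI coefI -> in_class c d wtJ coefJ.
Proof.
move=> JI; case: c => //= [[e He]|Hd|Hd]; first exists e.
all: by move=> j /JI [i Ci ->]; auto.
Qed.

Section DiagonalOperators.
Variable R : realType.
Local Notation C := R[i].
Local Notation chi := (@chi R).
Local Notation pauli := (@pauli R).
Local Notation pauli_string := (@pauli_string R).

Lemma normc_le_supnorm m (f : cube m -> C) x : normc (f x) <= supnorm f.
Proof. exact: le_bigmax. Qed.

Lemma supnorm_attained m (f : cube m -> C) : exists x, supnorm f = normc (f x).
Proof.
eexists; rewrite /supnorm (@bigmax_eq_arg _ _ _ 0 [ffun=> false] xpredT) // => x _.
exact: normc_ge0.
Qed.

Definition diag_op n (f : cube n -> C) : qop R n :=
  fun x y => if x == y then f x else 0.

Lemma apply_diag_op n (f : cube n -> C) v x : apply (diag_op f) v x = f x * v x.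
Proof.
rewrite /apply (bigD1 x) //= /diag_op eqxx big1 ?addr0 // => y /negbTE.
by rewrite eq_sym => ->; rewrite mul0r.
Qed.

Lemma opnorm_diag_op n (f : cube n -> C) : opnorm (diag_op f) = supnorm f.
Proof.
apply/eqP; rewrite eq_le; apply/andP; split.
  apply: opnorm_le => v v1; rewrite -[leRHS]mulr1 -v1.
  have -> : apply (diag_op f) v = fun x => f x * v x by apply/funext => x; exact: apply_diag_op.
  exact: vnorm_mul_le (normc_le_supnorm f).
have [x0 ->] := supnorm_attained f.
have Ae : apply (diag_op f) (point_vec x0 1) = point_vec x0 (f x0).
  by apply/funext => x; rewrite apply_diag_op /point_vec; case: eqP => [->|]; rewrite ?mulr1 ?mulr0.
by rewrite -(vnorm_point_vec x0) -Ae vnorm_apply_le_opnorm ?vnorm_basis.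
Qed.

Definition pauli_Z : 'I_4 := @Ordinal 4 3 isT.

Definition zstring n (S : {set 'I_n}) : pidx n :=
  [ffun k => if k \in S then pauli_Z else ord0].

Definition pauli_support n (s : pidx n) : {set 'I_n} := [set k | s k != ord0].

Lemma pweightE n (s : pidx n) : pweight s = #|pauli_support s|.
Proof. by apply: eq_card => k; rewrite inE; apply/idP/idP; rewrite classical_sets.in_setE. Qed.

Lemma pauli_support_zstring n (S : {set 'I_n}) : pauli_support (zstring S) = S.
Proof. by apply/setP => k; rewrite !inE ffunE; case: (k \in S). Qed.

Lemma pauli_diag (a : 'I_4) b :
  pauli a b b = if a == ord0 then 1 else if a == pauli_Z then sgnb R b else 0.
Proof. by case: a => [[|[|[|[|a]]]] ha] //; case: b. Qed.

Lemma pauli_string_diag n (s : pidx n) x :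
  pauli_string s x x =
  if s == zstring (pauli_support s) then chi (pauli_support s) x else 0.
Proof.
case: eqP => [sZ|sNZ].
  rewrite [in LHS]sZ /pauli_string /Defs.chi [RHS]big_mkcond; apply: eq_bigr => k _.
  by rewrite pauli_diag ffunE; case: (k \in _); rewrite ?eqxx.
have [k /andP[sk0 skZ]] : exists k, (s k != ord0) && (s k != pauli_Z).
  apply/existsP; apply: contra_notT sNZ => /existsPn sZ; apply/ffunP => k.
  by rewrite ffunE inE; move: (sZ k); case: eqP => //= _; rewrite negbK => /eqP.
by rewrite /pauli_string (bigD1 k) //= pauli_diag (negbTE sk0) (negbTE skZ) mul0r.
Qed.

Lemma pcoef_diag_op n (f : cube n -> C) s :
  pcoef (diag_op f) s =
  if s == zstring (pauli_support s) then fourier f (pauli_support s) else 0.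
Proof.
have -> : pcoef (diag_op f) s = (2 ^+ n)^-1 * \sum_x pauli_string s x x * f x.
  congr (_ * _); apply: eq_bigr => x _; rewrite (bigD1 x) //= /diag_op eqxx big1 ?addr0 //.
  by move=> y /negbTE ->; rewrite mulr0.
case: ifP => sZ; last by rewrite big1 ?mulr0 // => x _; rewrite pauli_string_diag sZ mul0r.
by congr (_ * _); apply: eq_bigr => x _; rewrite pauli_string_diag sZ mulrC.
Qed.

Lemma pauli_sum_diag_op n (f : cube n -> C) (r : R) :
  \sum_s normc (pcoef (diag_op f) s) * r ^+ pweight s =
  \sum_(S : {set 'I_n}) normc (fourier f S) * r ^+ #|S|.
Proof.
rewrite (bigID (fun s => s == zstring (pauli_support s))) /= [X in _ + X]big1 ?addr0;
  last by move=> s /negbTE sNZ; rewrite pcoef_diag_op sNZ normc0 mul0r.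
rewrite (reindex_onto (@zstring n) (@pauli_support n)) /= => [|s /eqP <-//].
apply: eq_big => S; first by rewrite pauli_support_zstring !eqxx.
by rewrite pcoef_diag_op pauli_support_zstring eqxx pweightE pauli_support_zstring.
Qed.

Lemma qBr_diag_op n (f : cube n -> C) : qBr (diag_op f) = Br f.
Proof.
rewrite /qBr /Br opnorm_diag_op; congr (ereal_sup [set _%:E | _ in _]).
by apply/funext => r /=; rewrite pauli_sum_diag_op.
Qed.

Lemma in_class_diag_op c d n (f : cube n -> C) :
  in_class c d (fun S : {set 'I_n} => #|S|) (fourier f) ->
  in_class c d (@pweight n) (pcoef (diag_op f)).
Proof.
apply: in_class_transfer => s; rewrite pcoef_diag_op.
by case: ifP => [_ fs|_]; [exists (pauli_support s); rewrite ?pweightE|rewrite eqxx].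
Qed.

End DiagonalOperators.

Lemma qBr_class_le_Br_class (R : realType) c d n :
  (qBr_class R c d n <= Br_class R c d n)%E.
Proof.
apply: le_ereal_inf_tmp => _ [f fc <-]; apply: ereal_inf_lbound.
by exists (diag_op f); [exact: in_class_diag_op|exact: qBr_diag_op].
Qed.

Lemma prodr_if_all (V : comPzSemiRingType) (I : finType) (P : pred I) (a : V) :
  \prod_i (if P i then a else 0) = if [forall i, P i] then a ^+ #|I| else 0.
Proof.
have [/forallP allP|] := boolP [forall i, P i].
  by rewrite -prodr_const; apply: eq_bigr => i _; rewrite allP.
by rewrite negb_forall => /existsP [i /negbTE Pi]; rewrite (bigD1 i) //= Pi mul0r.
Qed.

Section WalshSeries.
Variable R : realType.
Local Notation C := R[i].
Local Notation sgnb := (@sgnb R).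
Local Notation chi := (@chi R).

Lemma chiE m (S : {set 'I_m}) x :
  chi S x = \prod_j (if j \in S then sgnb (x j) else 1).
Proof. exact: big_mkcond. Qed.

Lemma sum_chiM m (S T : {set 'I_m}) :
  \sum_(x : cube m) chi S x * chi T x = if S == T then 2 ^+ m else 0.
Proof.
pose F j b : C := (if j \in S then sgnb b else 1) * (if j \in T then sgnb b else 1).
have sumF j : \sum_b F j b = if (j \in S) == (j \in T) then 2 else 0.
  by rewrite big_bool /F /sgnb; case: (j \in S); case: (j \in T) => /=; ring.
transitivity (\sum_(x : cube m) \prod_j F j (x j)).
  by apply: eq_bigr => x _; rewrite !chiE -big_split.
rewrite -bigA_distr_bigA /=; under eq_bigr => j _ do rewrite sumF.
rewrite prodr_if_all card_ord; congr (if _ then _ else _).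
by apply/eqfunP/eqP => [ST|-> //]; apply/setP.
Qed.

Section PrescribedFourierCoefficients.
Variables (m : nat) (I : finType) (c : I -> C) (T : I -> {set 'I_m}).
Hypothesis T_inj : injective T.

Definition walsh_series (x : cube m) : C := \sum_i c i * chi (T i) x.

Lemma fourier_walsh_series S :
  fourier walsh_series S = \sum_(i | T i == S) c i.
Proof.
rewrite /fourier /walsh_series.
under eq_bigr => x _ do rewrite mulr_suml.
rewrite exchange_big mulr_sumr [RHS]big_mkcond /=; apply: eq_bigr => i _.
under eq_bigr => x _ do rewrite -mulrA.
rewrite -mulr_sumr sum_chiM mulrCA; case: eqP => _; last by rewrite !mulr0.
by rewrite mulVf ?mulr1 // expf_neq0 // pnatr_eq0.
Qed.

Lemma fourier_walsh_series_at i : fourier walsh_series (T i) = c i.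
Proof.
by rewrite fourier_walsh_series (big_pred1 i) // => j; rewrite (inj_eq T_inj).
Qed.

Lemma fourier_walsh_series_out S :
  (forall i, T i != S) -> fourier walsh_series S = 0.
Proof. by move=> TS; rewrite fourier_walsh_series big_pred0 // => i; exact/negbTE. Qed.

Lemma sum_fourier_walsh_series (r : R) :
  \sum_(S : {set 'I_m}) normc (fourier walsh_series S) * r ^+ #|S| =
  \sum_i normc (c i) * r ^+ #|T i|.
Proof.
rewrite (bigID (fun S => S \in T @: finset.setT)) /= [X in _ + X]big1 ?addr0 => [|S TS]; last first.
  rewrite fourier_walsh_series_out ?normc0 ?mul0r // => i.
  by apply: contra TS => /eqP <-; exact: imset_f.
rewrite big_imset /=; last by move=> i j _ _; exact: T_inj.
by apply: eq_big => [i|i _]; rewrite ?inE // fourier_walsh_series_at.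
Qed.

Lemma in_class_walsh_series cl d (wt : I -> nat) :
  (forall i, #|T i| = wt i) -> in_class cl d wt c ->
  in_class cl d (fun S : {set 'I_m} => #|S|) (fourier walsh_series).
Proof.
move=> Twt; apply: in_class_transfer => S fS.
have [/existsP [i /eqP TiS]|/existsPn TS] := boolP [exists i, T i == S].
  by exists i; [rewrite -fourier_walsh_series_at TiS|rewrite -Twt TiS].
by rewrite fourier_walsh_series_out ?eqxx in fS.
Qed.

End PrescribedFourierCoefficients.

End WalshSeries.

Section PauliCode.
Variable n : nat.

Lemma card_blocks : #|{: 'I_n * 'I_3}| = (3 * n)%N.
Proof. by rewrite card_prod !card_ord mulnC. Qed.

Definition block_index (p : 'I_n * 'I_3) : 'I_(3 * n) :=
  cast_ord card_blocks (enum_rank p).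

Lemma block_index_inj : injective block_index.
Proof. by move=> p q /cast_ord_inj /enum_rank_inj. Qed.

Definition pauli_pairs (s : pidx n) : {set 'I_n * 'I_3} :=
  [set p | s p.1 == lift ord0 p.2].

Definition pauli_code (s : pidx n) : {set 'I_(3 * n)} := block_index @: pauli_pairs s.

Lemma card_pauli_code s : #|pauli_code s| = pweight s.
Proof.
rewrite card_imset ?pweightE; last exact: block_index_inj.
have <- : fst @: pauli_pairs s = pauli_support s.
  apply/setP => k; rewrite inE; apply/imsetP/idP => [[[k' j] + ->]|].
    by rewrite inE => /eqP ->; rewrite eq_sym neq_lift.
  by case: (unliftP ord0 (s k)) => [j skj _|-> //]; exists (k, j); rewrite ?inE ?skj.
rewrite card_in_imset // => -[k j] [k' j'].
rewrite !inE /= => /eqP skj /eqP sk'j' kk'.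
by rewrite -kk' skj in sk'j'; rewrite (lift_inj sk'j') kk'.
Qed.

Lemma pauli_code_inj : injective pauli_code.
Proof.
move=> s s' /(imset_inj block_index_inj) ss'; apply/ffunP => k.
have pairsE (t : pidx n) j : ((k, j) \in pauli_pairs t) = (t k == lift ord0 j).
  by rewrite inE.
case: (unliftP ord0 (s k)) => [j skj|sk0].
  by apply/eqP; rewrite skj eq_sym -pairsE -ss' pairsE skj.
case: (unliftP ord0 (s' k)) => [j s'kj|-> //].
by move: (pairsE s' j); rewrite -ss' pairsE sk0 s'kj eqxx (negbTE (neq_lift _ _)).
Qed.

End PauliCode.

Section PauliCodeCharacters.
Variable R : realType.
Local Notation C := R[i].
Local Notation sgnb := (@sgnb R).
Local Notation chi := (@chi R).

Definition qubit_sign (lam : 'I_3 -> bool) (a : 'I_4) : C :=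
  if unlift ord0 a is Some j then sgnb (lam j) else 1.

Definition block n (x : cube (3 * n)) (k : 'I_n) (j : 'I_3) : bool := x (block_index (k, j)).

Lemma chi_pauli_code n (s : pidx n) x :
  chi (pauli_code s) x = \prod_k qubit_sign (block x k) (s k).
Proof.
rewrite /Defs.chi big_imset /=; last by move=> p q _ _; exact: block_index_inj.
transitivity (\prod_k \prod_j (if s k == lift ord0 j then sgnb (block x k j) else 1)).
  by rewrite pair_big big_mkcond; apply: eq_bigr => -[k j] _; rewrite inE.
apply: eq_bigr => k _; rewrite /qubit_sign.
case: (unliftP ord0 (s k)) => [j ->|->]; last first.
  by apply: big1.
rewrite (bigD1 j) //= eqxx big1 ?mulr1 // => j' /negbTE j'j.
by rewrite (inj_eq lift_inj) eq_sym j'j.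
Qed.

Lemma prod_nonzero_pauli n (s : pidx n) (a : C) :
  \prod_k (if s k == ord0 then 1 else a) = a ^+ pweight s.
Proof.
rewrite pweightE -prodr_const [RHS]big_mkcond /=; apply: eq_bigr => k _.
by rewrite inE; case: eqP.
Qed.

End PauliCodeCharacters.

Section QubitProjectors.
Variable R : realType.
Local Notation C := R[i].
Local Notation sgnb := (@sgnb R).
Local Notation pauli := (@pauli R).

Definition inv_sqrt2 : C := ((Num.sqrt 2)^-1)%:C%C.

Lemma inv_sqrt2_sqr : inv_sqrt2 * inv_sqrt2 = 2^-1.
Proof.
rewrite -rmorphM /= -invfM -expr2 sqr_sqrtr ?ler0n //.
by rewrite rmorphV ?unitfE ?pnatr_eq0 //= rmorph_nat.
Qed.

Lemma normc_inv_sqrt2 : normc inv_sqrt2 ^+ 2 = 2^-1.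
Proof.
by rewrite normc_real ger0_norm ?invr_ge0 ?sqrtr_ge0 // exprVn sqr_sqrtr ?ler0n.
Qed.

(* The unit eigenvector of the Pauli matrix [j.+1] for the eigenvalue [sgnb l]. *)
Definition pauli_eigvec (j : 'I_3) (l b : bool) : C :=
  match nat_of_ord j with
  | 0 => inv_sqrt2 * (if b then sgnb l else 1)
  | 1 => inv_sqrt2 * (if b then 'i * sgnb l else 1)
  | _ => if b == l then 1 else 0
  end.

Lemma pauli_eigvec_projector j l u w :
  (pauli (lift ord0 j) u w * sgnb l + pauli ord0 u w) / 2 =
  pauli_eigvec j l u * (pauli_eigvec j l w)^*.
Proof.
have conjM (a b : C) : (a * b)^* = a^* * b^* by exact: rmorphM.
have conjN (a : C) : (- a)^* = - a^* by exact: rmorphN.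
have conj_inv_sqrt2 : inv_sqrt2^* = inv_sqrt2 by exact: conjc_real.
have i_sqr : ('i : C) * 'i = -1 by rewrite -expr2 sqrCi.
have inv_sqrt2_norm (a b : C) : inv_sqrt2 * a * (inv_sqrt2 * b)^* = 2^-1 * (a * b^*).
  by rewrite conjM conj_inv_sqrt2 mulrACA inv_sqrt2_sqr.
case: j => -[|[|[|//]]] ?; case: l; case: u; case: w;
  rewrite /pauli_eigvec /pauli /sgnb /= ?inv_sqrt2_norm ?conjM ?conjN ?conjC1 ?conjC0 ?conjCi.
all: by rewrite ?(mulr1, mulNr, mulrN, i_sqr); field.
Qed.

Definition qubit_weight (lam : 'I_3 -> bool) (a : 'I_4) : C :=
  if unlift ord0 a is Some j then 3^-1 * sgnb (lam j) else 1.

Lemma pauli_mixture lam u w :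
  2^-1 * \sum_a pauli a u w * qubit_weight lam a =
  3^-1 * \sum_j pauli_eigvec j (lam j) u * (pauli_eigvec j (lam j) w)^*.
Proof.
symmetry; under eq_bigr do rewrite -pauli_eigvec_projector mulrDl; symmetry.
rewrite big_ord_recl /qubit_weight unlift_none mulr1 big_split sumr_const card_ord /=.
under eq_bigr do rewrite liftK mulrCA.
rewrite -mulr_sumr -mulr_suml -mulr_natr.
by field.
Qed.

Lemma sum_normc_pauli_eigvec j l : \sum_b normc (pauli_eigvec j l b) ^+ 2 = 1.
Proof.
have half_sum : 2^-1 + 2^-1 = 1 :> R by field.
have normc_i : normc ('i : C) = 1 by rewrite /= expr0n expr1n add0r sqrtr1.
rewrite big_bool; case: j => -[|[|[|//]]] ?.
- change (normc (inv_sqrt2 * sgnb l) ^+ 2 + normc (inv_sqrt2 * 1) ^+ 2 = 1).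
  by rewrite !normcM !exprMn normc_inv_sqrt2 normc_sgnb
    normc1 !expr1n !mulr1 half_sum.
- change (normc (inv_sqrt2 * ('i * sgnb l)) ^+ 2 + normc (inv_sqrt2 * 1) ^+ 2 = 1).
  by rewrite !normcM !exprMn normc_inv_sqrt2 normc_sgnb normc_i
    normc1 !expr1n !mulr1 half_sum.
- change (normc (if true == l then 1 else 0 : C) ^+ 2 +
    normc (if false == l then 1 else 0 : C) ^+ 2 = 1).
  by case: l; rewrite normc0 normc1 expr1n expr0n ?addr0 ?add0r.
Qed.

End QubitProjectors.

Section PauliAverages.
Variable R : realType.
Local Notation C := R[i].
Local Notation pauli := (@pauli R).
Local Notation pauli_string := (@pauli_string R).
Local Notation pauli_eigvec := (@pauli_eigvec R).
Local Notation qubit_weight := (@qubit_weight R).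

Variables (n : nat) (A : qop R n).

Lemma sum_pcoefM (F : pidx n -> C) :
  \sum_s pcoef A s * F s =
  (2 ^+ n)^-1 * \sum_y \sum_z (\sum_s pauli_string s y z * F s) * A z y.
Proof.
under eq_bigr do rewrite -mulrA; rewrite -mulr_sumr; congr (_ * _).
under eq_bigr do rewrite mulr_suml; rewrite exchange_big; apply: eq_bigr => y _.
under eq_bigr do rewrite mulr_suml; rewrite exchange_big; apply: eq_bigr => z _.
by rewrite mulr_suml; apply: eq_bigr => s _; rewrite mulrAC.
Qed.

Lemma sum_pauli_string_prod (G : 'I_n -> 'I_4 -> C) y z :
  \sum_s pauli_string s y z * \prod_k G k (s k) =
  \prod_k \sum_a pauli a (y k) (z k) * G k a.
Proof.
by rewrite bigA_distr_bigA; apply: eq_bigr => s _; rewrite -big_split.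
Qed.

Variable lam : 'I_n -> 'I_3 -> bool.

Definition product_vec (J : {ffun 'I_n -> 'I_3}) (y : cube n) : C :=
  \prod_k pauli_eigvec (J k) (lam k (J k)) (y k).

Lemma vnorm_product_vec J : vnorm (product_vec J) = 1.
Proof.
rewrite /vnorm; under eq_bigr do rewrite normc_prod -prodrXl.
rewrite -(bigA_distr_bigA (fun k b => normc (pauli_eigvec (J k) (lam k (J k)) b) ^+ 2)).
rewrite big1 ?sqrtr1 // => k _.
exact: sum_normc_pauli_eigvec.
Qed.

Lemma sum_pcoef_qubit_weight :
  \sum_s pcoef A s * \prod_k qubit_weight (lam k) (s k) =
  (3 ^+ n)^-1 * \sum_J \sum_z (product_vec J z)^* * apply A (product_vec J) z.
Proof.
have kernel y z : (2 ^+ n)^-1 * \sum_s pauli_string s y z * \prod_k qubit_weight (lam k) (s k) =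
    (3 ^+ n)^-1 * \sum_J product_vec J y * (product_vec J z)^*.
  have -> : (2 ^+ n)^-1 = \prod_(k < n) (2^-1 : C) by rewrite prodr_const card_ord exprVn.
  rewrite (sum_pauli_string_prod (fun k => qubit_weight (lam k))) -big_split /=.
  under eq_bigr do rewrite pauli_mixture.
  rewrite big_split /= prodr_const card_ord exprVn bigA_distr_bigA; congr (_ * _).
  by apply: eq_bigr => J _; rewrite /product_vec rmorph_prod -big_split.
transitivity (\sum_y \sum_z (3 ^+ n)^-1 *
    \sum_J (product_vec J z)^* * (A z y * product_vec J y)).
  rewrite sum_pcoefM mulr_sumr; apply: eq_bigr => y _; rewrite mulr_sumr.
  apply: eq_bigr => z _; rewrite mulrA kernel -mulrA mulr_suml; congr (_ * _).
  by apply: eq_bigr => J _; ring.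
rewrite exchange_big /=; under eq_bigr => z _ do rewrite -mulr_sumr exchange_big.
rewrite -mulr_sumr exchange_big; congr (_ * _); apply: eq_bigr => J _.
by apply: eq_bigr => z _; rewrite /apply mulr_sumr.
Qed.

Lemma normc_sum_pcoef_qubit_weight_le :
  normc (\sum_s pcoef A s * \prod_k qubit_weight (lam k) (s k)) <= opnorm A.
Proof.
have dot_le J : normc (\sum_z (product_vec J z)^* * apply A (product_vec J) z) <= opnorm A.
  apply: le_trans (normc_dot_le _ _) _; rewrite vnorm_product_vec mul1r.
  exact: vnorm_apply_le_opnorm (vnorm_product_vec J).
have three_pos : (0 : R) < 3 ^+ n by rewrite exprn_gt0 ?ltr0n.
rewrite sum_pcoef_qubit_weight normcM normcV normcX normc_nat.
rewrite ler_pdivrMl //; apply: le_trans (normc_sum _ _ _) _.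
apply: le_trans (ler_sum _ (fun J _ => dot_le J)) _.
by rewrite sumr_const card_ffun !card_ord -natrX mulr_natl.
Qed.

End PauliAverages.

Section PauliWalshFunction.
Variable R : realType.
Local Notation C := R[i].
Local Notation qubit_weight := (@qubit_weight R).

Variables (n : nat) (A : qop R n).

Definition pauli_walsh : cube (3 * n) -> C :=
  walsh_series (fun s => pcoef A s * 3^-1 ^+ pweight s) (@pauli_code n).

Definition pauli_mass (r : R) : R := \sum_s normc (pcoef A s) * r ^+ pweight s.

Lemma pauli_walshE x :
  pauli_walsh x = \sum_s pcoef A s * \prod_k qubit_weight (block x k) (s k).
Proof.
apply: eq_bigr => s _; rewrite chi_pauli_code -mulrA -prod_nonzero_pauli -big_split /=.
congr (_ * _); apply: eq_bigr => k _; rewrite /qubit_weight /qubit_sign.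
by case: (unliftP ord0 (s k)) => [j ->|->]; rewrite ?mulr1 // eq_sym (negbTE (neq_lift _ _)).
Qed.

Lemma supnorm_pauli_walsh_le : supnorm pauli_walsh <= opnorm A.
Proof.
apply: bigmax_le (opnorm_ge0 A) _ => x _; rewrite pauli_walshE.
exact: normc_sum_pcoef_qubit_weight_le.
Qed.

Lemma sum_fourier_pauli_walsh r :
  \sum_(S : {set 'I_(3 * n)}) normc (fourier pauli_walsh S) * r ^+ #|S| = pauli_mass (r / 3).
Proof.
rewrite sum_fourier_walsh_series; last exact: pauli_code_inj.
apply: eq_bigr => s _; rewrite card_pauli_code normcM normcX.
by rewrite normcV normc_nat -mulrA -exprMn [_^-1 * r]mulrC.
Qed.

Lemma in_class_pauli_walsh c d :
  in_class c d (@pweight n) (pcoef A) ->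
  in_class c d (fun S : {set 'I_(3 * n)} => #|S|) (fourier pauli_walsh).
Proof.
move=> Ac; apply: in_class_walsh_series (@card_pauli_code n) _.
  exact: pauli_code_inj.
apply: in_class_transfer Ac => s; rewrite mulf_eq0 negb_or => /andP[As _].
by exists s.
Qed.

End PauliWalshFunction.

Section PauliExpansion.
Variable R : realType.
Local Notation C := R[i].
Local Notation pauli := (@pauli R).
Local Notation pauli_string := (@pauli_string R).

Lemma sum_pauliM p q u v :
  \sum_a pauli a p q * pauli a u v = if (p == v) && (q == u) then 2 else 0.
Proof.
have i_sqr : ('i : C) * 'i = -1 by rewrite -expr2 sqrCi.
rewrite !big_ord_recl big_ord0; case: p; case: q; case: u; case: v; rewrite /pauli /=;
by rewrite ?(mul0r, mulr0, mul1r, mulr1, mulrN, mulNr, opprK, i_sqr, addr0, add0r, subrr) -?mulr2n.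
Qed.

Variables (n : nat) (A : qop R n).

Lemma pauli_expansion x y : A x y = \sum_s pcoef A s * pauli_string s x y.
Proof.
have kernel y' z' : \sum_s pauli_string s y' z' * pauli_string s x y =
    if (y' == y) && (z' == x) then 2 ^+ n else 0.
  rewrite (sum_pauli_string_prod (fun k a => pauli a (x k) (y k))).
  under eq_bigr do rewrite sum_pauliM.
  rewrite prodr_if_all card_ord; congr (if _ then _ else _).
  apply/forallP/andP => [yzxy|[/eqP -> /eqP ->] k]; last by rewrite !eqxx.
  by split; apply/eqP/ffunP => k; have /andP[/eqP ? /eqP ?] := yzxy k.
rewrite sum_pcoefM (bigD1 y) //= [X in _ + X]big1 ?addr0; last first.
  by move=> y' y'y; apply: big1 => z' _; rewrite kernel (negbTE y'y) mul0r.
rewrite (bigD1 x) //= [X in _ + X]big1 ?addr0; last first.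
  by move=> z' z'x; rewrite kernel eqxx (negbTE z'x) mul0r.
by rewrite kernel !eqxx mulKf // expf_neq0 // pnatr_eq0.
Qed.

Definition pauli_id : pidx n := [ffun=> ord0].

Lemma pweight_eq0 s : (pweight s == 0%N) = (s == pauli_id).
Proof.
rewrite pweightE cards_eq0; apply/eqP/eqP => [supp0|->]; last first.
  by apply/setP => k; rewrite !inE ffunE.
apply/ffunP => k; rewrite ffunE; apply/eqP.
have : k \notin pauli_support s by rewrite supp0 inE.
by rewrite inE negbK.
Qed.

Lemma opnorm_scalar : (forall s, s != pauli_id -> pcoef A s = 0) ->
  opnorm A = normc (pcoef A pauli_id).
Proof.
move=> A_scalar.
have A_diag : A = diag_op (fun=> pcoef A pauli_id).
  apply/funext => x; apply/funext => y; rewrite pauli_expansion (bigD1 pauli_id) //=.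
  rewrite big1 ?addr0 => [|s /A_scalar ->]; last by rewrite mul0r.
  rewrite /diag_op /pauli_string; under eq_bigr do rewrite ffunE.
  rewrite [X in _ * X](prodr_if_all (fun k => x k == y k)) expr1n.
  have -> : [forall k, x k == y k] = (x == y) by apply/eqfunP/eqP => [/ffunP|->].
  by case: (x == y); rewrite ?mulr1 ?mulr0.
rewrite [in LHS]A_diag opnorm_diag_op.
by have [x] := supnorm_attained (fun _ : cube n => pcoef A pauli_id).
Qed.

End PauliExpansion.

Lemma sum_powers_IVT (R : realType) (I : finType) (a : I -> R) (w : I -> nat) (t v : R) :
  (forall i, 0 <= a i) -> (exists i, 0 < a i /\ (0 < w i)%N) -> 0 < t ->
  \sum_i a i * t ^+ w i <= v -> exists2 q, t <= q & \sum_i a i * q ^+ w i = v.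
Proof.
move=> a_ge0 [i0 [ai0_gt0 wi0_gt0]] t_gt0 phit_le.
pose phi q := \sum_i a i * q ^+ w i.
have phi_ge_term q : 0 <= q -> a i0 * q ^+ w i0 <= phi q.
  move=> q_ge0; rewrite /phi (bigD1 i0) //= lerDl.
  by apply: sumr_ge0 => i _; rewrite mulr_ge0 ?exprn_ge0.
have v_ge0 : 0 <= v.
  apply: le_trans (le_trans (phi_ge_term _ (ltW t_gt0)) phit_le).
  by rewrite mulr_ge0 ?exprn_ge0 ?ltW.
(* At [Q] the term of [i0] alone already exceeds [v]. *)
pose Q := t + 1 + v / a i0.
have va_ge0 : 0 <= v / a i0 by rewrite divr_ge0 // ltW.
have Q_ge1 : 1 <= Q by rewrite /Q; lra.
have tQ : t <= Q by rewrite /Q; lra.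
have v_le_phiQ : v <= phi Q.
  apply: le_trans (phi_ge_term _ (le_trans ler01 Q_ge1)).
  have Q_le_pow : Q <= Q ^+ w i0.
    by rewrite -(prednK wi0_gt0) exprS ler_peMr ?exprn_ege1 // (le_trans ler01).
  apply: le_trans (ler_wpM2l (ltW ai0_gt0) Q_le_pow).
  rewrite /Q !mulrDr mulrCA mulfV ?gt_eqF //.
  by rewrite mulr1; have := mulr_ge0 (ltW ai0_gt0) (ltW t_gt0); lra.
have phi_cont : {within `[t, Q], continuous phi}%classic.
  apply: continuous_subspaceT; rewrite (_ : phi = horner (\sum_i a i *: 'X^(w i))).
    exact: continuous_horner.
  by apply/funext => q; rewrite horner_sum; apply: eq_bigr => i _; rewrite hornerZ hornerXn.
have phi_tQ : Num.min (phi t) (phi Q) <= v <= Num.max (phi t) (phi Q).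
  by rewrite ge_min phit_le le_max v_le_phiQ orbT.
have [q] := IVT tQ phi_cont phi_tQ.
by rewrite in_itv /= => /andP[tq _] phiq; exists q.
Qed.

Section QuantumRadiusBound.
Variable R : realType.

Lemma pauli_mass_hits_opnorm n (A : qop R n) t : 0 < t -> pauli_mass A t <= opnorm A ->
  exists2 q, t <= q & pauli_mass A q = opnorm A.
Proof.
move=> t_gt0 mass_le.
have [/existsP [s /andP[s_id As]]|/existsPn A_scalar] :=
  boolP [exists s, (s != pauli_id n) && (pcoef A s != 0)].
  apply: sum_powers_IVT mass_le => //; first by move=> s'; exact: normc_ge0.
  exists s; split; last by rewrite lt0n pweight_eq0.
  by rewrite lt_def normc_ge0 andbT; apply: contra As => /eqP/eq0_normc ->.
have {}A_scalar s : s != pauli_id n -> pcoef A s = 0.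
  by move=> s_id; apply/eqP; move: (A_scalar s); rewrite s_id negbK.
exists t => //; rewrite opnorm_scalar // /pauli_mass (bigD1 (pauli_id n)) //= big1 ?addr0.
  have /eqP -> : pweight (pauli_id n) == 0%N by rewrite pweight_eq0.
  by rewrite expr0 mulr1.
by move=> s /A_scalar ->; rewrite normc0 mul0r.
Qed.

Lemma Br_pauli_walsh_le n (A : qop R n) : (Br (pauli_walsh A) <= 3%:E * qBr A)%E.
Proof.
rewrite /Br; apply: ge_ereal_sup => _ [r [r_gt0 r_root] <-].
have r3_gt0 : 0 < r / 3 by rewrite divr_gt0 ?ltr0n.
have [|q r3q qroot] := @pauli_mass_hits_opnorm n A _ r3_gt0.
  by rewrite -sum_fourier_pauli_walsh r_root supnorm_pauli_walsh_le.
have q_le : (q%:E <= qBr A)%E.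
  by apply: ereal_sup_ubound; exists q => //; split => //; exact: lt_le_trans r3q.
rewrite -[r](@divfK _ 3) ?pnatr_eq0 // EFinM muleC.
by apply: lee_wpmul2l; rewrite ?lee_fin ?ler0n // (le_trans _ q_le) ?lee_fin.
Qed.

End QuantumRadiusBound.

Lemma Br_class_le_qBr_class (R : realType) c d n :
  (Br_class R c d (3 * n) <= 3%:E * qBr_class R c d n)%E.
Proof.
set B := Br_class R c d (3 * n).
have B_le A : in_class c d (@pweight n) (pcoef A) -> (B <= 3%:E * qBr A)%E.
  move=> Ac; apply: le_trans (Br_pauli_walsh_le A); apply: ereal_inf_lbound.
  by exists (pauli_walsh A); first exact: in_class_pauli_walsh.
have three_neq0 : (3 : R) != 0 by rewrite pnatr_eq0.
have -> : B = (3%:E * ((3^-1)%:E * B))%E by rewrite muleA -EFinM mulfV // mul1e.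
apply: lee_wpmul2l; first by rewrite lee_fin ler0n.
apply: le_ereal_inf_tmp => _ [A Ac <-].
apply: le_trans (lee_wpmul2l _ (B_le A Ac)) _; first by rewrite lee_fin invr_ge0 ler0n.
by rewrite muleA -EFinM mulVf // mul1e.
Qed.

Local Open Scope ereal_scope.

Theorem theorem4p4 (R : realType) (c : fclass) (d n : nat) :
  (1 <= d <= n)%N ->
  qBr_class R c d n <= Br_class R c d n /\
  Br_class R c d (3 * n) <= 3%:E * qBr_class R c d n.
Proof.
by move=> _; split; [exact: qBr_class_le_Br_class|exact: Br_class_le_qBr_class].
Qed.
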